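(* Let $D\subset\mathbb{C}^n$ be a bounded homogeneous domain with $0\in D$ and $\psi\in H(D)$. If $M_\psi$ is an isometry on $\mathcal{B}(D)$ (respectively $\mathcal{B}_{0^*}(D)$), then $M_{\psi^k}$ is an isometry on $\mathcal{B}(D)$ (respectively $\mathcal{B}_{0^*}(D)$) for all $k\in\mathbb{N}$; in particular $\|\psi^k\|_{\mathcal{B}}=1$ for all $k\in\mathbb{N}$.
   Context: A domain $D\subset\mathbb{C}^n$ is homogeneous if its group of biholomorphic self-maps acts transitively on $D$. $H(D)$ denotes the holomorphic functions $D\to\mathbb{C}$. For $f\in H(D)$ and $z\in D$, $Q_f(z)=\sup_{u\in\mathbb{C}^n\setminus\{0\}}\frac{|\nabla f(z)u|}{H_z(u,\bar u)^{1/2}}$, where $\nabla f(z)u=\sum_{j=1}^n\frac{\partial f}{\partial z_j}(z)u_j$ and $H_z$ is the Bergman metric of $D$; $\beta_f=\sup_{z\in D}Q_f(z)$. The Bloch space $\mathcal{B}(D)$ is the set of $f\in H(D)$ with $\beta_f<\infty$, with norm $\|f\|_{\mathcal{B}}=|f(0)|+\beta_f$. The $*$-little Bloch space is $\mathcal{B}_{0^*}(D)=\{f\in\mathcal{B}(D):\lim_{z\to\partial^*D}Q_f(z)=0\}$ with the same norm, where $\partial^*D$ is the distinguished boundary of $D$. $M_\psi f=\psi f$. *)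

From HB Require Import structures.
From mathcomp Require Import all_boot all_order all_algebra.
From mathcomp Require Import all_classical all_reals all_analysis.
From mathcomp Require Import complex.
Set Implicit Arguments. Unset Strict Implicit. Unset Printing Implicit Defensive.
Import Order.TTheory GRing.Theory Num.Theory.
Import numFieldNormedType.Exports.
Local Open Scope classical_set_scope.
Local Open Scope ring_scope.

(* R[i] as a normed space over itself (its own modulus topology); then
   C^n = 'rV[R[i]]_n is a normed R[i]-module, so [differentiable] below is
   complex (Frechet) differentiability, i.e. holomorphy. *)
Section ComplexNormed.
Variable R : realType.
HB.instance Definition _ := PseudoPointedMetric.copy R[i] (R[i])^o.
HB.instance Definition _ := GRing.ComAlgebra.copy R[i] (R[i])^o.
HB.instance Definition _ := NormedModule.copy R[i] (R[i])^o.
End ComplexNormed.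

Section Bloch.
Variables (R : realType) (n : nat).
Local Notation C := (R[i]).
Local Notation Cn := ('rV[R[i]]_n).

Definition cabs (x : C) : R := ComplexField.Normc.normc x.

Definition holo_on (D : set Cn) (f : Cn -> C) : Prop :=
  forall z, D z -> differentiable f z.

Definition holo_map_on (D : set Cn) (phi : Cn -> Cn) : Prop :=
  forall z, D z -> differentiable phi z.

Definition is_domain (D : set Cn) : Prop := open D /\ connected D.

Definition bounded_domain_set (D : set Cn) : Prop :=
  exists M : R, forall z, D z -> forall j : 'I_n, cabs (z ord0 j) <= M.

Definition biholomorphic_self (D : set Cn) (phi : Cn -> Cn) : Prop :=
  holo_map_on D phi /\ phi @` D `<=` D /\
  exists psi : Cn -> Cn, holo_map_on D psi /\ psi @` D `<=` D /\
    (forall z, D z -> psi (phi z) = z) /\ (forall z, D z -> phi (psi z) = z).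

Definition homogeneous (D : set Cn) : Prop :=
  forall z w, D z -> D w -> exists phi, biholomorphic_self D phi /\ phi z = w.

Definition pt_of_coords (s : seq R) : Cn :=
  \row_(j < n) (Complex (nth 0 s (2 * j)) (nth 0 s (2 * j + 1))).

(* iterated Lebesgue integral over R^m of a nonnegative function
   (equal to the integral w.r.t. Lebesgue measure on R^m by Tonelli) *)
Fixpoint iter_integral (m : nat) (F : seq R -> \bar R) : \bar R :=
  match m with
  | 0 => F [::]
  | m'.+1 => (\int[@lebesgue_measure R]_x iter_integral m' (fun s => F (x :: s)))%E
  end.

Definition L2norm2 (D : set Cn) (f : Cn -> C) : \bar R :=
  iter_integral (2 * n)
    (fun s => ((cabs (f (pt_of_coords s)) ^+ 2) * \1_D (pt_of_coords s))%:E).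

Definition bergman_kernel_diag (D : set Cn) (z : Cn) : \bar R :=
  ereal_sup [set ((cabs (f z)) ^+ 2)%:E |
             f in [set f | holo_on D f /\ (L2norm2 D f <= 1)%E]].

Definition rderiv (v : Cn) (g : Cn -> R) : Cn -> R :=
  fun z => derive1 (fun t : R => g (z + (t%:C)%C *: v)) 0.

Definition ex (j : 'I_n) : Cn := delta_mx ord0 j.
Definition ey (j : 'I_n) : Cn := 'i%C *: delta_mx ord0 j.

(* Wirtinger mixed derivative d/dz_i d/dzbar_j g (z), for real-valued g:
   (1/4) (dx_i - i dy_i)(dx_j + i dy_j) g *)
Definition wirtinger_mixed (g : Cn -> R) (z : Cn) (i j : 'I_n) : C :=
  (Complex (rderiv (ex i) (rderiv (ex j) g) z + rderiv (ey i) (rderiv (ey j) g) z)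
           (rderiv (ex i) (rderiv (ey j) g) z - rderiv (ey i) (rderiv (ex j) g) z))
  / 4%:R.

Definition log_bergman (D : set Cn) : Cn -> R :=
  fun z => ln (fine (bergman_kernel_diag D z)).

Definition bergman_metric (D : set Cn) (z u : Cn) : C :=
  \sum_(i < n) \sum_(j < n)
     wirtinger_mixed (log_bergman D) z i j * u ord0 i * (u ord0 j)^*%C.

(* nabla f(z) u = sum_j df/dz_j (z) u_j is the complex differential 'd f z u *)
Definition Qf (D : set Cn) (f : Cn -> C) (z : Cn) : \bar R :=
  ereal_sup [set (cabs ('d f z u) / Num.sqrt (complex.Re (bergman_metric D z u)))%:E
            | u in [set u : Cn | u != 0]].

Definition beta (D : set Cn) (f : Cn -> C) : \bar R :=
  ereal_sup [set Qf D f z | z in D].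

Definition bloch (D : set Cn) (f : Cn -> C) : Prop :=
  holo_on D f /\ (beta D f < +oo)%E.

Definition bloch_norm (D : set Cn) (f : Cn -> C) : R :=
  cabs (f 0) + fine (beta D f).

Definition disc_algebra (D : set Cn) (f : Cn -> C) : Prop :=
  {within closure D, continuous f} /\ holo_on D f.

Definition is_closed_boundary (D : set Cn) (S : set Cn) : Prop :=
  closed S /\ S `<=` closure D /\
  forall f, disc_algebra D f -> forall z, closure D z ->
    ((cabs (f z))%:E <= ereal_sup [set (cabs (f x))%:E | x in S])%E.

Definition distinguished_boundary (D : set Cn) : set Cn :=
  \bigcap_(S in is_closed_boundary D) S.

Definition little_bloch_star (D : set Cn) (f : Cn -> C) : Prop :=
  bloch D f /\
  forall e : R, 0 < e -> exists U : set Cn,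
    open U /\ distinguished_boundary D `<=` U /\
    forall z, D z -> U z -> (Qf D f z < e%:E)%E.

Definition mult_op (psi f : Cn -> C) : Cn -> C := fun z => psi z * f z.

Definition mult_isometry_on (X : (Cn -> C) -> Prop) (D : set Cn) (psi : Cn -> C)
  : Prop :=
  forall f, X f -> X (mult_op psi f) /\ bloch_norm D (mult_op psi f) = bloch_norm D f.

Definition fpow (psi : Cn -> C) (k : nat) : Cn -> C := fun z => psi z ^+ k.

End Bloch.

From HB Require Import structures.
From mathcomp Require Import all_boot all_order all_algebra.
From mathcomp Require Import all_classical all_reals all_analysis.
From mathcomp Require Import complex.
Set Implicit Arguments.
Unset Strict Implicit.
Unset Printing Implicit Defensive.
Import Order.TTheory GRing.Theory Num.Theory.
Import numFieldNormedType.Exports.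
Local Open Scope classical_set_scope.
Local Open Scope ring_scope.

(* Since [M_(psi^k) = (M_psi)^k], the operators [M_(psi^k)] are composites of
   isometries.  A constant function has vanishing Bloch seminorm, so its Bloch
   norm is its modulus; applying the isometry [M_(psi^k)] to the constant [1]
   gives [||psi^k|| = ||1|| = 1].  Neither argument uses the geometry of [D]
   (boundedness, homogeneity, nor even [0 \in D]). *)

Lemma ereal_sup_sub_ninfty0 (R : realType) (A : set (\bar R)) :
  A `<=` [set -oo%E; 0%:E] -> ereal_sup A = -oo%E \/ ereal_sup A = 0%:E.
Proof.
move=> A_sub; have [A0|nA0] := pselect (A 0%:E).
  right; apply/eqP; rewrite eq_le ereal_sup_ubound // andbT.
  by apply: ge_ereal_sup => x /A_sub; case=> ->; rewrite ?leNye.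
left; apply/eqP; rewrite -leeNy_eq; apply: ge_ereal_sup => x Ax.
by have [->|x0] : x = -oo%E \/ x = 0%:E := A_sub x Ax; last by rewrite x0 in Ax.
Qed.

Section ConstantFunctions.
Variables (R : realType) (n : nat) (D : set 'rV[R[i]]_n) (c : R[i]).

Lemma Qf_cst z : Qf D (cst c) z = -oo%E \/ Qf D (cst c) z = 0%:E.
Proof.
apply: ereal_sup_sub_ninfty0 => _ [u _ <-]; right.
suff -> : cabs ('d (cst c) z u) = 0 by rewrite mul0r.
by rewrite diff_cst; exact: ComplexField.Normc.normc0.
Qed.

(* [-oo] occurs when [D] is empty or [n = 0]; [fine] sends it to [0] anyway. *)
Lemma beta_cst : beta D (cst c) = -oo%E \/ beta D (cst c) = 0%:E.
Proof. by apply: ereal_sup_sub_ninfty0 => _ [z _ <-]; exact: Qf_cst. Qed.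

Lemma bloch_norm_cst : bloch_norm D (cst c) = cabs c.
Proof. by rewrite /bloch_norm; case: beta_cst => ->; rewrite addr0. Qed.

Lemma bloch_cst : bloch D (cst c).
Proof.
split; first by move=> z _; exact: differentiable_cst.
by case: beta_cst => ->; rewrite ?ltNyr ?ltry.
Qed.

Lemma little_bloch_star_cst : little_bloch_star D (cst c).
Proof.
split; first exact: bloch_cst.
move=> e e_gt0; exists setT; split; [exact: openT | split => // z _ _].
by case: (Qf_cst z) => ->; rewrite ?ltNyr ?lte_fin.
Qed.

End ConstantFunctions.

Section MultiplicationIsometries.
Variables (R : realType) (n : nat) (D : set 'rV[R[i]]_n).
Variable X : ('rV[R[i]]_n -> R[i]) -> Prop.

Lemma mult_op_fpowS (psi f : 'rV[R[i]]_n -> R[i]) k :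
  mult_op (fpow psi k.+1) f = mult_op psi (mult_op (fpow psi k) f).
Proof. by apply: funext => z; rewrite /mult_op /fpow exprS mulrA. Qed.

Lemma mult_isometry_on_fpow psi k :
  mult_isometry_on X D psi -> mult_isometry_on X D (fpow psi k).
Proof.
move=> iso_psi; elim: k => [|k IHk] f Xf.
  suff -> : mult_op (fpow psi 0) f = f by [].
  by apply: funext => z; rewrite /mult_op /fpow expr0 mul1r.
rewrite mult_op_fpowS; have [Xpsikf Npsikf] := IHk f Xf.
have [Xpsik1f Npsik1f] := iso_psi _ Xpsikf.
by split; last rewrite Npsik1f.
Qed.

Lemma bloch_norm_mult_isometry phi :
  X (cst 1) -> mult_isometry_on X D phi -> bloch_norm D phi = 1.
Proof.
move=> X1 iso_phi.
have -> : phi = mult_op phi (cst 1) by apply: funext => z; rewrite /mult_op mulr1.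
rewrite (iso_phi _ X1).2 bloch_norm_cst.
exact: ComplexField.Normc.normc1.
Qed.

End MultiplicationIsometries.

Theorem mainTheorem12 (R : realType) (n : nat) (D : set 'rV[R[i]]_n)
    (psi : 'rV[R[i]]_n -> R[i]) :
  is_domain D -> bounded_domain_set D -> homogeneous D -> D 0 ->
  holo_on D psi ->
  (mult_isometry_on (bloch D) D psi ->
     forall k : nat, (0 < k)%N ->
       mult_isometry_on (bloch D) D (fpow psi k) /\ bloch_norm D (fpow psi k) = 1) /\
  (mult_isometry_on (little_bloch_star D) D psi ->
     forall k : nat, (0 < k)%N ->
       mult_isometry_on (little_bloch_star D) D (fpow psi k) /\
       bloch_norm D (fpow psi k) = 1).
Proof.
move=> _ _ _ _ _; split=> iso_psi k _.
- have iso_psik := mult_isometry_on_fpow k iso_psi.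
  by split; last exact: bloch_norm_mult_isometry (bloch_cst D 1) iso_psik.
- have iso_psik := mult_isometry_on_fpow k iso_psi.
  by split; last exact: bloch_norm_mult_isometry (little_bloch_star_cst D 1) iso_psik.
Qed.
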